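(* Let $n\ge 2$ and $d\ge 2$, and let $\ell=\mathrm{lcm}(2,3,\ldots,n)+1$. Then the cyclic Kautz digraph $CK(d,\ell)$ has girth greater than $n$ (if it contains a directed cycle). Consequently, there exist cyclic Kautz digraphs of arbitrarily large girth.
   Context: The cyclic Kautz digraph $CK(d,\ell)$ has vertex set $\{x_1\ldots x_\ell\in\mathbb Z_{d+1}^\ell : x_i\neq x_{i+1}\ (1\le i\le \ell-1),\ x_\ell\neq x_1\}$ and arcs $x_1x_2\ldots x_\ell\to x_2\ldots x_\ell y$ for every $y\in\mathbb Z_{d+1}$ with $y\neq x_2,x_\ell$. The girth is the length of a shortest directed cycle. *)

From mathcomp Require Import all_boot.
Set Implicit Arguments. Unset Strict Implicit. Unset Printing Implicit Defensive.

(* Vertices of CK(d,l): words x_1 ... x_l over Z_{d+1} (represented by 'I_d.+1,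
   0-indexed positions 0..l-1) with consecutive letters distinct and x_l <> x_1. *)
Definition ck_vertex (d l : nat) (x : seq 'I_d.+1) : Prop :=
  size x = l /\
  (forall i, i.+1 < l -> nth ord0 x i <> nth ord0 x i.+1) /\
  nth ord0 x l.-1 <> nth ord0 x 0.

Definition ck_arc (d l : nat) (x y : seq 'I_d.+1) : Prop :=
  @ck_vertex d l x /\ @ck_vertex d l y /\
  (forall i, i.+1 < l -> nth ord0 y i = nth ord0 x i.+1) /\
  nth ord0 y l.-1 <> nth ord0 x 1 /\
  nth ord0 y l.-1 <> nth ord0 x l.-1.

Definition ck_cycle (d l : nat) (c : seq (seq 'I_d.+1)) : Prop :=
  0 < size c /\ uniq c /\
  forall i, i < size c -> @ck_arc d l (nth [::] c i) (nth [::] c (i.+1 %% size c)).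

Definition lcm_upto (n : nat) : nat := \big[lcmn/1]_(2 <= i < n.+1) i.

From mathcomp Require Import all_boot.

Set Implicit Arguments.
Unset Strict Implicit.

(* Along a cycle each letter moves one position to the left per arc, so the
   letter at position j of c_a is the first letter of c_(a+j).  If the length
   k of the cycle divides l - 1, the last letter of c_0 is then the first
   letter of c_0 again, which a vertex of CK(d,l) forbids.  Every k <= n
   divides lcm(2,...,n) = l - 1. *)

Lemma ck_cycle_nth_shift d l (c : seq (seq 'I_d.+1)) (a j : nat) :
  @ck_cycle d l c -> j < l ->
  nth ord0 (nth [::] c (a %% size c)) j = nth ord0 (nth [::] c ((a + j) %% size c)) 0.
Proof.
move=> [c_gt0 [_ c_arc]]; elim: j a => [|j IHj] a lt_j_l; first by rewrite addn0.
have [_ [_ [shift_arc _]]] := c_arc _ (ltn_pmod a c_gt0).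
rewrite -shift_arc // IHj; last exact: ltnW.
by rewrite addSn -addnS modnDml.
Qed.

Lemma ck_cycle_size_ndvd d l (c : seq (seq 'I_d.+1)) :
  @ck_cycle d l.+1 c -> ~~ (size c %| l).
Proof.
move=> c_cycle; apply/negP => /eqP dvd_c_l.
have := ck_cycle_nth_shift 0 c_cycle (ltnSn l).
rewrite mod0n add0n dvd_c_l.
by case: c_cycle => c_gt0 [_ /(_ 0 c_gt0) [[_ [_ last_neq_first]] _]].
Qed.

Lemma dvdn_lcm_upto n k : 0 < k <= n -> k %| lcm_upto n.
Proof.
case: k => [//|[_|k /= le_k_n]]; first exact: dvd1n.
rewrite /lcm_upto (bigD1_seq k.+2) ?iota_uniq ?mem_index_iota //=.
exact: dvdn_lcml.
Qed.

Theorem mainTheorem10 (n d : nat) (hn : 2 <= n) (hd : 2 <= d) :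
  forall c : seq (seq 'I_d.+1),
    @ck_cycle d (lcm_upto n).+1 c -> n < size c.
Proof.
move=> c c_cycle; rewrite ltnNge; apply/negP => le_c_n.
have c_gt0 : 0 < size c by case: c_cycle.
by have := ck_cycle_size_ndvd c_cycle; rewrite dvdn_lcm_upto ?c_gt0.
Qed.
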